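(* Let $q,d\geq 2$ be integers and let $\psi\in\mathbb{Z}$, $\psi\neq 0$. Then for every $\theta,x\in\mathbb{Z}$, the natural density of the set $\{n\in\mathbb{N}: \psi w_q(n)+\theta n+x\equiv 0\pmod d\}$ exists and equals $$\begin{cases}\frac{1}{d}\gcd(\psi,\theta,d) & \text{if } \gcd(\psi,\theta,d)\mid\gcd(x,d),\\ 0 & \text{otherwise.}\end{cases}$$
   Context: For an integer $q\geq 2$ and $n\in\mathbb{N}$: $v_q(0)=0$ and, for $n>0$, $v_q(n)=\max\{k: q^k\mid n\}$; $w_q(n)=\sum_{i=0}^n v_q(i)$. The natural density of $T\subseteq\mathbb{N}$ is $\lim_{N\to\infty}|\{n\in T: 0\leq n<N\}|/N$. *)

From mathcomp Require Import all_boot all_order all_algebra.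
From mathcomp Require Import all_classical all_reals all_analysis.
Set Implicit Arguments. Unset Strict Implicit. Unset Printing Implicit Defensive.
Import Order.TTheory GRing.Theory Num.Theory numFieldNormedType.Exports.

(* v_q(n) = max {k : q^k | n} for n > 0, and v_q(0) = 0.
   For q >= 2 and n > 0, any k with q^k | n satisfies k < n.+1. *)
Definition vq (q n : nat) : nat :=
  if n == 0 then 0 else \max_(k < n.+1 | q ^ k %| n) k.

Definition wq (q n : nat) : nat := \sum_(0 <= i < n.+1) vq q i.

Definition count_below (P : pred nat) (N : nat) : nat := #|[set n : 'I_N | P n]|.

Local Open Scope classical_set_scope.
Local Open Scope ring_scope.
Definition has_density (R : realType) (P : pred nat) (l : R) : Prop :=
  (fun N : nat => ((count_below P N)%:R / N%:R : R)) @ \oo --> l.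

From mathcomp Require Import all_boot all_order all_algebra.
From mathcomp Require Import all_classical all_reals all_analysis.
From mathcomp Require Import zify ring lra.
Set Implicit Arguments. Unset Strict Implicit. Unset Printing Implicit Defensive.
Import Order.TTheory GRing.Theory Num.Theory numFieldNormedType.Exports.

(* For b < q^L one has w_q(q^L a + b) = a (1 + q + ... + q^(L-1)) + w_q(a) + w_q(b), so the
   residue pair r(n) = (w_q(n) mod d, n mod d) of q^L a + b is an affine function of r(a) fixed by
   L and b.  Counting, for each pair of states s, t in (Z/d)^2, the b < q^L that lead from s to t
   gives transition matrices P_L with P_(K+L) = P_K P_L; they are doubly stochastic, and some P_L
   has all entries positive because every residue pair is some r(b).  Doeblin's contraction then
   drives all rows of P_K to the uniform law, so r(n) is equidistributed on every block
   [q^K a, q^K (a+1)) up to an error that vanishes with K, hence in natural density.  The density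
   sought is thus the proportion of (u, v) in (Z/d)^2 with d | psi u + theta v + x, which a count
   of solutions of linear congruences evaluates. *)

Definition geosum (q L : nat) : nat := \sum_(i < L) q ^ i.

Lemma geosumS q L : geosum q L.+1 = geosum q L + q ^ L.
Proof. by rewrite /geosum big_ord_recr. Qed.

Lemma geosumD q K L : geosum q (K + L) = geosum q K + q ^ K * geosum q L.
Proof.
elim: L => [|L IHL]; first by rewrite addn0 /geosum big_ord0 muln0 addn0.
by rewrite addnS !geosumS IHL expnD; ring.
Qed.

Section Valuation.
Variable q : nat.
Hypothesis q_gt1 : 1 < q.

Lemma vq_spec n : 0 < n -> q ^ vq q n %| n /\ ~~ (q ^ (vq q n).+1 %| n).
Proof.
move=> n_gt0; rewrite /vq gtn_eqF //.
have [|k qk_dvd max_k] := @eq_bigmax_cond _ [pred k : 'I_n.+1 | q ^ k %| n] val.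
  by apply/card_gt0P; exists ord0; rewrite inE expn0 dvd1n.
rewrite max_k; split=> //; apply/negP=> qk1_dvd.
have k1_lt : k.+1 < n.+1.
  by rewrite ltnS (leq_trans (ltn_expl _ q_gt1)) // dvdn_leq.
have := @leq_bigmax_cond _ [pred k : 'I_n.+1 | q ^ k %| n] val (Ordinal k1_lt) qk1_dvd.
by rewrite max_k /= ltnn.
Qed.

Lemma vq_eq n k : 0 < n -> q ^ k %| n -> ~~ (q ^ k.+1 %| n) -> vq q n = k.
Proof.
move=> n_gt0 qk_dvd qk1_ndvd; have [qv_dvd qv1_ndvd] := vq_spec n_gt0.
apply/eqP; rewrite eqn_leq; apply/andP; split; rewrite leqNgt; apply/negP => lt_exp.
  by case/negP: qk1_ndvd; apply: dvdn_trans qv_dvd; apply: dvdn_exp2l.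
by case/negP: qv1_ndvd; apply: dvdn_trans qk_dvd; apply: dvdn_exp2l.
Qed.

Lemma vq_ndvd n : ~~ (q %| n) -> vq q n = 0.
Proof.
move=> q_ndvd; have n_gt0 : 0 < n by case: n q_ndvd; rewrite ?dvdn0.
by apply: vq_eq; rewrite ?expn0 ?dvd1n ?expn1.
Qed.

Lemma vq_mulq m : 0 < m -> vq q (q * m) = (vq q m).+1.
Proof.
move=> m_gt0; have [qv_dvd qv1_ndvd] := vq_spec m_gt0.
have q_gt0 : 0 < q by apply: ltnW.
by apply: vq_eq; rewrite ?muln_gt0 ?q_gt0 // expnS dvdn_pmul2l.
Qed.

Lemma wq0 : wq q 0 = 0.
Proof. by rewrite /wq big_nat1. Qed.

Lemma wqS n : wq q n.+1 = wq q n + vq q n.+1.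
Proof. by rewrite /wq big_nat_recr. Qed.

Lemma wq_mulqD m r : r < q -> wq q (q * m + r) = m + wq q m.
Proof.
have wq_digit k s : s < q -> wq q (q * k + s) = wq q (q * k).
  elim: s => [|s IHs] s_lt; first by rewrite addn0.
  rewrite addnS wqS IHs ?(ltnW s_lt) // vq_ndvd ?addn0 //.
  by rewrite -addnS dvdn_addr ?dvdn_mulr // gtnNdvd.
move=> r_lt; rewrite wq_digit //; elim: m => [|m IHm]; first by rewrite muln0 wq0.
have q_pred : q * m.+1 = (q * m + q.-1).+1 by rewrite mulnS; case: q q_gt1 => // ? _; lia.
rewrite q_pred wqS wq_digit ?ltn_predL ?(ltnW q_gt1) // IHm -q_pred vq_mulq // wqS.
lia.
Qed.

Lemma wq1 : wq q 1 = 0.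
Proof. by have := wq_mulqD 0 q_gt1; rewrite muln0 add0n wq0. Qed.

Lemma wqq : wq q q = 1.
Proof. by have := wq_mulqD 1 (ltnW q_gt1); rewrite muln1 addn0 wq1. Qed.

Lemma wq_block L a b : b < q ^ L -> wq q (q ^ L * a + b) = a * geosum q L + wq q a + wq q b.
Proof.
elim: L b => [|L IHL] b b_lt.
  move: b_lt; rewrite expn0 ltnS leqn0 => /eqP->.
  by rewrite mul1n addn0 wq0 /geosum big_ord0 muln0 add0n addn0.
have q_gt0 : 0 < q by apply: ltnW.
have bq_lt : b %/ q < q ^ L by rewrite ltn_divLR // -expnSr.
have wq_b : wq q b = b %/ q + wq q (b %/ q).
  by rewrite {1}(divn_eq b q) [_ * q]mulnC wq_mulqD ?ltn_pmod.
have -> : q ^ L.+1 * a + b = q * (q ^ L * a + b %/ q) + b %% q.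
  by rewrite {1}(divn_eq b q) expnS; ring.
by rewrite wq_mulqD ?ltn_pmod // IHL // geosumS wq_b; ring.
Qed.

End Valuation.

Lemma big_ord_mul (R : Type) (idx : R) (op : Monoid.law idx) m k (F : nat -> R) :
  \big[op/idx]_(n < m * k) F n = \big[op/idx]_(i < k) \big[op/idx]_(j < m) F (m * i + j).
Proof.
elim: k => [|k IHk]; first by rewrite muln0 !big_ord0.
by rewrite mulnS addnC big_split_ord IHk big_ord_recr.
Qed.

Lemma sum_fiber (I T : finType) (f : I -> T) (F : T -> nat) :
  \sum_(i : I) F (f i) = \sum_(t : T) (\sum_(i : I) (f i == t)) * F t.
Proof.
under [RHS]eq_bigr do rewrite big_distrl /=.
rewrite exchange_big /=; apply: eq_bigr => i _.
by rewrite (bigD1 (f i)) //= eqxx mul1n big1 ?addn0 // => t /negbTE; rewrite eq_sym => ->.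
Qed.

Lemma eventually_periodic (T : finType) (f : nat -> T) :
  (forall i j, f i = f j -> f i.+1 = f j.+1) ->
  exists i P, 0 < P /\ forall k, f (i + k * P) = f i.
Proof.
move=> f_step.
have /injectivePn[i [j ij_neq f_ij]] : ~~ injectiveb (fun i : 'I_#|T|.+1 => f i).
  by apply/injectiveP => /leq_card; rewrite card_ord ltnn.
wlog ij_lt : i j ij_neq f_ij / i < j.
  move=> IH; have := ij_neq; rewrite neq_ltn => /orP[] lt; first exact: IH lt.
  by apply: (IH j i); rewrite 1?eq_sym.
exists i, (j - i); split; first by rewrite subn_gt0.
have f_shift r : f (i + r) = f (j + r).
  by elim: r => [|r IHr]; rewrite ?addn0 // !addnS; apply: f_step.
elim=> [|k IHk]; first by rewrite addn0.
by rewrite mulSn addnA subnKC 1?ltnW // -f_shift.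
Qed.

Lemma bounded_witnesses (T : finType) (P : T -> nat -> Prop) :
  (forall t, exists n, P t n) -> exists M, forall t, exists2 n, n < M & P t n.
Proof.
move=> /choice[f Pf]; exists (\max_t (f t)).+1 => t.
by exists (f t); rewrite // ltnS (leq_bigmax t).
Qed.

Lemma count_belowE (P : pred nat) N : count_below P N = \sum_(n < N) P n.
Proof.
rewrite /count_below -sum1dep_card big_mkcond /=.
by apply: eq_bigr => n _; case: (P n).
Qed.

Lemma count_below_periodic (P : pred nat) m k : (forall n, P (n + m) = P n) ->
  count_below P (m * k) = k * count_below P m.
Proof.
move=> P_per; rewrite !count_belowE (big_ord_mul _ _ _ (fun n => nat_of_bool (P n))).
rewrite (eq_bigr (fun _ => \sum_(n < m) P n)).
  by rewrite sum_nat_const card_ord.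
move=> i _; apply: eq_bigr => j _; elim: (nat_of_ord i) => [|l IHl]; first by rewrite muln0.
by rewrite mulnS -addnA addnC P_per.
Qed.

Lemma count_below_mulD (P : pred nat) Q M r :
  count_below P (Q * M + r) =
  \sum_(a < M) count_below (fun b => P (Q * a + b)) Q + count_below (fun j => P (Q * M + j)) r.
Proof.
rewrite !count_belowE big_split_ord (big_ord_mul _ _ _ (fun n => nat_of_bool (P n))).
by congr (_ + _); apply: eq_bigr => a _; rewrite count_belowE.
Qed.

Lemma count_below_le (P : pred nat) N : count_below P N <= N.
Proof. by rewrite /count_below -[X in _ <= X]card_ord max_card. Qed.

Lemma sum_pred1 (T : finType) (x : T) : \sum_(y : T) (y == x) = 1.
Proof. by rewrite (bigD1 x) //= eqxx big1 // => y /negbTE->. Qed.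

Local Open Scope ring_scope.

Lemma count_lin_cong_coprime (m : nat) (p t : int) : (0 < m)%N -> coprimez m%:Z p ->
  count_below (fun a => (m%:Z %| p * a%:Z + t)%Z) m = 1%N.
Proof.
move=> m_gt0 mp_cop.
have [u [v uv_eq]] := Bezoutz p m%:Z.
move: uv_eq; rewrite gcdzC (eqP mp_cop) => uv_eq.
have m_neq0 : m%:Z != 0 by rewrite eqz_nat -lt0n.
pose a0 := ((- t * u) %% m%:Z)%Z.
have a0_ge0 : 0 <= a0 by rewrite modz_ge0.
have a0_lt : (`|a0| < m)%N by rewrite -ltz_nat gez0_abs // ltz_pmod.
have a0_sol : (m%:Z %| p * `|a0|%N%:Z + t)%Z.
  have := divz_eq (- t * u) m%:Z; rewrite -/a0; set Q := (_ %/ _)%Z => tuE.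
  apply/dvdzP; exists (t * v - p * Q); rewrite gez0_abs //.
  have -> : a0 = - t * u - Q * m%:Z by rewrite tuE; ring.
  by rewrite -[t in _ + t]mulr1 -uv_eq; ring.
have sol_uniq (a b : 'I_m) : (m%:Z %| p * a%:Z + t)%Z -> (m%:Z %| p * b%:Z + t)%Z -> a = b.
  move=> a_sol b_sol; apply/val_inj/eqP; rewrite -eqz_nat -subr_eq0.
  have : (m%:Z %| p * (a%:Z - b%:Z))%Z.
    have -> : p * (a%:Z - b%:Z) = (p * a%:Z + t) - (p * b%:Z + t) by ring.
    exact: rpredB.
  rewrite Gauss_dvdzr // dvdzE absz_nat; apply: contraLR => ab_neq.
  by rewrite gtnNdvd ?absz_gt0 //; have := ltn_ord a; have := ltn_ord b; lia.
rewrite /count_below (fintype.eq_card1 (x := Ordinal a0_lt)) // => a; rewrite inE.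
by apply/idP/eqP => [a_sol|->]; first exact: sol_uniq.
Qed.

Lemma count_lin_cong (m : nat) (p t : int) : (0 < m)%N ->
  count_below (fun a => (m%:Z %| p * a%:Z + t)%Z) m =
  (gcdn `|p| m * ((gcdn `|p| m)%:Z %| t)%Z)%N.
Proof.
move=> m_gt0; set h := gcdn `|p| m.
have h_gt0 : (0 < h)%N by rewrite gcdn_gt0 m_gt0 orbT.
have hm_dvd : (h %| m)%N by apply: dvdn_gcdr.
have hp_dvd : (h%:Z %| p)%Z by rewrite dvdzE absz_nat dvdn_gcdl.
have [ht_dvd|ht_ndvd] := boolP (h%:Z %| t)%Z; last first.
  rewrite muln0 count_belowE big1 // => a _; apply/eqP; rewrite eqb0.
  apply: contra ht_ndvd => mt_dvd.
  have : (h%:Z %| p * a%:Z + t)%Z by apply: dvdz_trans mt_dvd; rewrite dvdzE !absz_nat.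
  by rewrite rpredDl // dvdz_mulr.
have [p' p_eq] := dvdzP hp_dvd; have [t' t_eq] := dvdzP ht_dvd.
set m' := (m %/ h)%N; have m_eq : m = (m' * h)%N by rewrite divnK.
have mp'_cop : coprimez m'%:Z p'.
  have p_abs : `|p|%N = (`|p'| * h)%N by rewrite p_eq abszM absz_nat.
  rewrite coprimezE absz_nat /coprime -(eqn_pmul2r h_gt0) mul1n muln_gcdl.
  by rewrite -m_eq -p_abs /h gcdnC.
have -> : (fun a : nat => (m%:Z %| p * a%:Z + t)%Z) = (fun a => (m'%:Z %| p' * a%:Z + t')%Z).
  apply: funext => a; rewrite p_eq t_eq {1}m_eq PoszM.
  rewrite -[RHS](@dvdz_mul2r h%:Z) ?eqz_nat -?lt0n //; congr (_ %| _)%Z; ring.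
rewrite muln1 m_eq count_below_periodic ?count_lin_cong_coprime ?muln1 //.
  by move: m_gt0; rewrite m_eq muln_gt0 => /andP[].
by move=> a; rewrite PoszD mulrDr addrAC rpredDr // dvdz_mull.
Qed.

Lemma card_lin_cong2 (d : nat) (psi theta x : int) : (0 < d)%N ->
  #|[set t : 'I_d * 'I_d | (d%:Z %| psi * t.1%:Z + theta * t.2%:Z + x)%Z]| =
  (d * gcdn (gcdn `|psi| `|theta|) d * ((gcdn (gcdn `|psi| `|theta|) d)%:Z %| x)%Z)%N.
Proof.
move=> d_gt0; set g1 := gcdn `|psi| d.
have g1_gt0 : (0 < g1)%N by rewrite gcdn_gt0 d_gt0 orbT.
rewrite -sum1dep_card big_mkcond /=.
rewrite -(pair_bigA _ (fun a b : 'I_d =>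
  if (d%:Z %| psi * a%:Z + theta * b%:Z + x)%Z then 1%N else 0%N)) exchange_big /=.
transitivity (muln g1 (count_below (fun b => (g1%:Z %| theta * b%:Z + x)%Z) d)).
  rewrite count_belowE big_distrr /=; apply: eq_bigr => b _.
  rewrite -count_lin_cong // count_belowE.
  by apply: eq_bigr => a _; rewrite addrA; case: (_ %| _)%Z.
have d_eq : d = (g1 * (d %/ g1))%N by rewrite mulnC divnK // dvdn_gcdr.
rewrite {1}d_eq count_below_periodic ?count_lin_cong // => [|b].
  by rewrite mulnA mulnCA -d_eq /g1 gcdnCA gcdnA mulnCA mulnA.
by rewrite PoszD mulrDr addrAC rpredDr // dvdz_mull.
Qed.

Lemma dvdz_lin_modn (d a b : nat) (psi theta x : int) :
  (d%:Z %| psi * (a %% d)%N%:Z + theta * (b %% d)%N%:Z + x)%Z =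
  (d%:Z %| psi * a%:Z + theta * b%:Z + x)%Z.
Proof.
rewrite [in RHS](divn_eq a d) [in RHS](divn_eq b d) !PoszD !PoszM.
set a1 := (a %/ d)%N%:Z; set a0 := (a %% d)%N%:Z; set b1 := (b %/ d)%N%:Z; set b0 := (b %% d)%N%:Z.
have -> : psi * (a1 * d%:Z + a0) + theta * (b1 * d%:Z + b0) + x =
    psi * a0 + theta * b0 + x + d%:Z * (psi * a1 + theta * b1) by ring.
by rewrite [RHS]rpredDr //; apply/dvdz_mulr/dvdzz.
Qed.

Section DoeblinContraction.
Variables (R : archiRealFieldType) (G : finType) (p : nat -> G -> G -> R).
Hypothesis p_ge0 : forall K s t, 0 <= p K s t.
Hypothesis p_row : forall K s, \sum_t p K s t = 1.
Hypothesis p_col : forall K t, \sum_s p K s t = 1.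
Hypothesis p_add : forall K L s t, p (K + L) s t = \sum_u p K s u * p L u t.
Variables (L0 : nat) (delta : R).
Hypothesis p_lb : forall s t, delta <= p L0 s t.

Local Notation unif := (#|G|%:R^-1 : R).

Definition dist_unif K s := \sum_t `|p K s t - unif|.

Lemma sum_unif (s : G) : \sum_(t : G) unif = 1.
Proof.
have G_neq0 : #|G|%:R != 0 :> R by rewrite pnatr_eq0 -lt0n; apply/card_gt0P; exists s.
by rewrite sumr_const -[RHS](mulVf G_neq0) mulr_natr.
Qed.

Lemma sum_sub_unif K s : \sum_t (p K s t - unif) = 0.
Proof. by rewrite sumrB p_row sum_unif ?subrr. Qed.

Lemma dist_unif_le2 K s : dist_unif K s <= 2.
Proof.
apply: le_trans (_ : \sum_t (p K s t + unif) <= 2).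
  apply: ler_sum => t _; apply: le_trans (ler_normB _ _) _.
  by rewrite !ger0_norm ?invr_ge0.
by rewrite big_split /= p_row sum_unif.
Qed.

Lemma doeblin_coef_ge0 (s : G) : 0 <= 1 - #|G|%:R * delta.
Proof.
rewrite subr_ge0 -[leRHS](p_row L0 s) (le_trans _ (ler_sum _ (fun t _ => p_lb s t))) //.
by rewrite sumr_const mulr_natl.
Qed.

Lemma dist_unif_contract K s :
  dist_unif (K + L0) s <= (1 - #|G|%:R * delta) * dist_unif K s.
Proof.
(* The rows of [p K s] minus the uniform law sum to 0, so [delta] may be subtracted from
   [p L0 u t]; what remains is nonnegative and its rows sum to [1 - #|G| delta]. *)
have dev_add t : p (K + L0) s t - unif = \sum_u (p K s u - unif) * (p L0 u t - delta).
  under [RHS]eq_bigr do rewrite mulrBr.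
  rewrite sumrB -mulr_suml sum_sub_unif mul0r subr0 p_add.
  by under [RHS]eq_bigr do rewrite mulrBl; rewrite sumrB -mulr_sumr p_col mulr1.
apply: le_trans (_ : \sum_t \sum_u `|p K s u - unif| * (p L0 u t - delta) <= _).
  apply: ler_sum => t _; rewrite dev_add; apply: le_trans (ler_norm_sum _ _ _) _.
  by apply: ler_sum => u _; rewrite normrM [`|p L0 u t - delta|]ger0_norm ?subr_ge0.
rewrite exchange_big /dist_unif mulr_sumr /=; apply: ler_sum => u _.
by rewrite -mulr_sumr sumrB p_row sumr_const mulr_natl mulrC.
Qed.

Lemma dist_unif_decay j s : dist_unif (j * L0) s <= 2 * (1 - #|G|%:R * delta) ^+ j.
Proof.
elim: j s => [|j IHj] s; first by rewrite mul0n expr0 mulr1 dist_unif_le2.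
rewrite mulSn addnC; apply: le_trans (dist_unif_contract _ _) _.
by rewrite exprS mulrCA ler_wpM2l ?doeblin_coef_ge0.
Qed.

Lemma dist_unif_small : 0 < delta ->
  forall e, 0 < e -> exists K, forall s, dist_unif K s <= e.
Proof.
move=> delta_gt0 e e_gt0.
have [s0 _|G0] := pickP (@predT G); last by exists 0%N => s; have := G0 s.
have c_ge0 := doeblin_coef_ge0 s0; set c := 1 - _ in c_ge0 *.
have c_lt1 : `|c| < 1.
  by rewrite ger0_norm // ltrBlDr ltrDl mulr_gt0 // ltr0n; apply/card_gt0P; exists s0.
have e2_gt0 : 0 < e / 2 by rewrite divr_gt0.
have [j _ cj_small] := (cvgrPdist_lt _ _).1 (cvg_expr c_lt1) _ e2_gt0.
have := cj_small j (leqnn j); rewrite /= sub0r normrN ger0_norm ?exprn_ge0 // => cj_lt.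
by exists (j * L0)%N => s; apply: le_trans (dist_unif_decay j s) _; lra.
Qed.

End DoeblinContraction.

Lemma count_below_dev (R : realFieldType) (P : pred nat) (rho e : R) Q : (0 < Q)%N ->
  (forall a, `|Q%:R * rho - (count_below (fun b => P (Q * a + b)) Q)%:R| <= Q%:R * e) ->
  forall N, `|N%:R * rho - (count_below P N)%:R| <= N%:R * e + Q%:R * (1 + `|rho|).
Proof.
move=> Q_gt0 block_dev N; set M := (N %/ Q)%N; set r := (N %% Q)%N.
have Q_pos : 0 < Q%:R :> R by rewrite ltr0n.
have e_ge0 : 0 <= e by rewrite -(pmulr_rge0 _ Q_pos) (le_trans _ (block_dev 0%N)).
have N_eq : N = (Q * M + r)%N by rewrite mulnC -divn_eq.
have r_le : r%:R <= Q%:R :> R by rewrite ler_nat ltnW ?ltn_pmod.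
have MQ_le : M%:R * Q%:R <= N%:R :> R by rewrite -natrM ler_nat N_eq mulnC leq_addr.
set T := count_below (fun j => P (Q * M + j)) r.
have T_le : T%:R <= r%:R :> R by rewrite ler_nat count_below_le.
have -> : N%:R * rho - (count_below P N)%:R =
    \sum_(a < M) (Q%:R * rho - (count_below (fun b => P (Q * a + b)) Q)%:R) + (r%:R * rho - T%:R).
  rewrite sumrB sumr_const card_ord -mulr_natl {1 2}N_eq count_below_mulD.
  by rewrite !natrD natrM natr_sum; ring.
apply: le_trans (ler_normD _ _) _.
have blocks_le : `|\sum_(a < M) (Q%:R * rho - (count_below (fun b => P (Q * a + b)) Q)%:R)|
    <= M%:R * Q%:R * e.
  apply: le_trans (ler_norm_sum _ _ _) (le_trans (ler_sum _ _) _) => [a _|].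
    exact: block_dev.
  by rewrite sumr_const card_ord -mulrA [leRHS]mulr_natl.
have tail_le : `|r%:R * rho - T%:R| <= r%:R * `|rho| + r%:R.
  by apply: le_trans (ler_normB _ _) _; rewrite normrM ger0_norm ?normr_nat ?lerD2l.
have : M%:R * Q%:R * e <= N%:R * e by rewrite ler_wpM2r.
have : r%:R * `|rho| <= Q%:R * `|rho| by rewrite ler_wpM2r.
lra.
Qed.

Lemma has_density_of_blocks (R : realType) (P : pred nat) (rho : R) :
  (forall e, 0 < e -> exists2 Q, (0 < Q)%N &
     forall a, `|Q%:R * rho - (count_below (fun b => P (Q * a + b)) Q)%:R| <= Q%:R * e) ->
  has_density P rho.
Proof.
move=> blocks; apply/cvgrPdist_le => e e_gt0.
have [Q Q_gt0 block_dev] := blocks (e / 2) (divr_gt0 e_gt0 (ltr0Sn R 1)).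
set K := Q%:R * (1 + `|rho|).
have K_ge0 : 0 <= K by rewrite mulr_ge0 ?addr_ge0.
have bound_ge0 : 0 <= 2 * K / e by rewrite divr_ge0 ?mulr_ge0 // ltW.
exists (Num.Def.archi_bound (2 * K / e)).+1 => // N /= N_gt.
have N_pos : 0 < N%:R :> R by rewrite ltr0n (leq_trans _ N_gt).
have KN : K <= e / 2 * N%:R.
  have : 2 * K / e <= N%:R.
    by apply: le_trans (ltW (archi_boundP bound_ge0)) _; rewrite ler_nat ltnW.
  by rewrite ler_pdivrMr //; lra.
have -> : rho - (count_below P N)%:R / N%:R = (N%:R * rho - (count_below P N)%:R) / N%:R.
  by field; rewrite gt_eqF.
rewrite normrM normfV (gtr0_norm N_pos) ler_pdivrMr //.
apply: le_trans (count_below_dev Q_gt0 block_dev N) _; rewrite -/K.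
have -> : e * N%:R = N%:R * (e / 2) + e / 2 * N%:R by field.
by rewrite lerD2l.
Qed.

Section ResidueChain.
Variables q d' : nat.
Hypothesis q_gt1 : (1 < q)%N.
(* Writing d as d'.+2 makes 'I_d the ring Z/dZ. *)
Local Notation d := d'.+2.
Local Notation G := ('I_d * 'I_d)%type.

Definition wres (n : nat) : G := ((wq q n)%:R, n%:R).

Definition wstep L (s : G) (b : nat) : G :=
  (s.1 + (geosum q L)%:R * s.2 + (wq q b)%:R, (q ^ L)%:R * s.2 + b%:R).

Lemma wstep0r L n : wstep L 0 n = wres n.
Proof. by rewrite /wstep /= !mulr0 !add0r. Qed.

Lemma wstep_comp K L s a b : (b < q ^ L)%N ->
  wstep L (wstep K s a) b = wstep (K + L) s (q ^ L * a + b).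
Proof.
move=> b_lt; rewrite /wstep /= wq_block // geosumD expnD.
by congr pair; rewrite !(natrD, natrM); ring.
Qed.

Lemma wres_block L a b : (b < q ^ L)%N -> wres (q ^ L * a + b) = wstep L (wres a) b.
Proof. by move=> b_lt; rewrite -(wstep0r 0 a) wstep_comp // wstep0r. Qed.

Definition ntrans L (s t : G) : nat := (\sum_(b < q ^ L) (wstep L s b == t))%N.

Lemma ntrans_row L s : (\sum_t ntrans L s t)%N = (q ^ L)%N.
Proof.
rewrite exchange_big /= -[RHS]card_ord -sum1_card; apply: eq_bigr => b _.
by under eq_bigr do rewrite eq_sym; rewrite sum_pred1.
Qed.

Lemma ntrans_add K L s t :
  ntrans (K + L) s t = (\sum_u ntrans K s u * ntrans L u t)%N.
Proof.
rewrite /ntrans expnD mulnC.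
rewrite (big_ord_mul _ _ _ (fun n => nat_of_bool (wstep (K + L) s n == t))).
transitivity (\sum_(a < q ^ K) ntrans L (wstep K s a) t)%N.
  by apply: eq_bigr => a _; apply: eq_bigr => b _; rewrite -wstep_comp.
exact: (sum_fiber (fun a : 'I_(q ^ K) => wstep K s a) (fun u => ntrans L u t)).
Qed.

Lemma ntrans_col L t : (\sum_s ntrans L s t)%N = (q ^ L)%N.
Proof.
(* Given b and s.2, exactly one s.1 leads to t; and (s.2, b) |-> q^L s.2 + b enumerates
   the integers below d q^L. *)
case: t => t1 t2; have fiber_b (b : nat) : (\sum_(s : G) (wstep L s b == (t1, t2)))%N =
    (\sum_(s2 < d) ((q ^ L * s2 + b)%:R == t2))%N.
  rewrite -(pair_bigA _ (fun s1 s2 => nat_of_bool (wstep L (s1, s2) b == (t1, t2)))).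
  rewrite exchange_big /=.
  apply: eq_bigr => s2 _; rewrite natrD natrM natr_Zp.
  under eq_bigr do rewrite /wstep xpair_eqE /= -addrA eq_sym -subr_eq eq_sym -mulnb.
  by rewrite -big_distrl /= sum_pred1 mul1n.
rewrite /ntrans exchange_big /=; under eq_bigr do rewrite fiber_b.
rewrite exchange_big /= -(big_ord_mul _ _ _ (fun n => nat_of_bool (n%:R == t2))).
rewrite -(count_belowE (fun n => n%:R == t2)) mulnC count_below_periodic => [|n].
  rewrite count_belowE (eq_bigr (fun n : 'I_d => nat_of_bool (n == t2))) ?sum_pred1 ?muln1 //.
  by move=> n _; rewrite natr_Zp.
by rewrite natrD (pchar_Zp (isT : 1 < d)%N) addr0.
Qed.

Lemma wres_surj t : exists b, wres b = t.
Proof.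
(* For a fixed i in the eventually periodic part of L |-> (geosum q L, q^L) mod d, and any b,
   there is L >= b with the same residues as i; putting a digit block a in front of b, at
   position L, shifts r(b) by (w_q a + a geosum q i, a q^i) mod d. *)
pose reach t := exists b, wres b = t.
pose f L : G := ((geosum q L)%:R, (q ^ L)%:R).
have [i [P [P_gt0 f_per]]] : exists i P, (0 < P)%N /\ forall k, f (i + k * P) = f i.
  apply: eventually_periodic => i j [geo_ij pow_ij].
  by rewrite /f !geosumS !expnS !natrD !natrM geo_ij pow_ij.
have reach_shift a u v : reach (u, v) ->
    reach (u + (wq q a)%:R + (geosum q i)%:R * a%:R, v + (q ^ i)%:R * a%:R).
  move=> [b wres_b]; set L := (i + b * P)%N.
  have b_lt : (b < q ^ L)%N.
    by apply: leq_trans (ltn_expl b q_gt1) _; rewrite leq_pexp2l ?(ltnW q_gt1) // /L; nia.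
  have [geo_L pow_L] := f_per b; rewrite /f -/L in geo_L pow_L.
  exists (q ^ L * a + b)%N; rewrite wres_block // /wstep /= -geo_L -pow_L.
  by move: wres_b => [<- <-]; congr pair; ring.
have reach_eq x y : reach x -> x = y -> reach y by move=> ? <-.
set Sc : 'I_d := (geosum q i)%:R; set Qc : 'I_d := (q ^ i)%:R.
have reach_shift1 n u v : reach (u, v) -> reach (u + Sc * n%:R, v + Qc * n%:R).
  elim: n => [|n IHn] /=; first by rewrite !mulr0 !addr0.
  move=> /IHn /(reach_shift 1%N) /reach_eq; apply; rewrite (wq1 q_gt1).
  by congr pair; rewrite -natr1; ring.
(* (1, 0) = (1 + q Sc, q Qc) + q (d - 1) (Sc, Qc) in (Z/d)^2. *)
have reach_succ u v : reach (u, v) -> reach (u + 1, v).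
  move=> /(reach_shift q) /(reach_shift1 (q * d'.+1)%N) /reach_eq; apply; rewrite (wqq q_gt1).
  have d_eq0 : d%:R = 0 :> 'I_d := pchar_Zp (isT : 1 < d)%N.
  by congr pair; rewrite -addrA -mulrDr -natrD -mulnS natrM d_eq0; ring.
have reach_add n u v : reach (u, v) -> reach (u + n%:R, v).
  elim: n => [|n IHn] /=; first by rewrite addr0.
  by move=> /IHn /reach_succ /reach_eq; apply; rewrite -addrA -natr1.
case: t => t1 t2.
have := reach_add (t1 - (wq q t2)%:R) _ _ (ex_intro _ (nat_of_ord t2) erefl).
by rewrite natr_Zp addrC subrK natr_Zp.
Qed.

Lemma ntrans_pos : exists L, forall s t, (0 < ntrans L s t)%N.
Proof.
have [M wres_lt] := bounded_witnesses wres_surj.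
exists M => s [t1 t2].
have [b b_lt [wq_b b_eq]] := wres_lt (t1 - s.1 - (geosum q M)%:R * s.2, t2 - (q ^ M)%:R * s.2).
have b_ltq : (b < q ^ M)%N := ltn_trans b_lt (ltn_expl M q_gt1).
rewrite /ntrans (bigD1 (Ordinal b_ltq)) //= /wstep wq_b b_eq.
by rewrite (_ : (_, _) = (t1, t2)) ?eqxx //; congr pair; ring.
Qed.

Section TransitionProbabilities.
Variable R : realType.

Definition ptrans K (s t : G) : R := (ntrans K s t)%:R / (q ^ K)%:R.

Lemma qexp_gt0 K : 0 < (q ^ K)%:R :> R.
Proof. by rewrite ltr0n expn_gt0 ltnW. Qed.

Lemma ptrans_ge0 K s t : 0 <= ptrans K s t.
Proof. by rewrite divr_ge0 ?ler0n ?ltW ?qexp_gt0. Qed.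

Lemma sum_ptrans K (F : G -> nat) :
  (\sum_t F t)%N = (q ^ K)%N -> \sum_t (F t)%:R / (q ^ K)%:R = 1 :> R.
Proof. by move=> F_sum; rewrite -mulr_suml -natr_sum F_sum divff ?gt_eqF ?qexp_gt0. Qed.

Lemma ptrans_add K L s t : ptrans (K + L) s t = \sum_u ptrans K s u * ptrans L u t.
Proof.
rewrite /ptrans ntrans_add natr_sum expnD natrM mulr_suml; apply: eq_bigr => u _.
by rewrite natrM; field; rewrite !gt_eqF ?qexp_gt0.
Qed.

Lemma ptrans_mix : forall e, 0 < e -> exists K, forall s, dist_unif ptrans K s <= e.
Proof.
have [L0 ntrans_L0] := ntrans_pos.
have ptrans_lb s t : (q ^ L0)%:R^-1 <= ptrans L0 s t.
  by rewrite /ptrans ler_pdivlMr ?qexp_gt0 // mulVf ?gt_eqF ?qexp_gt0 // ler1n.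
apply: (dist_unif_small ptrans_ge0 _ _ ptrans_add ptrans_lb); last by rewrite invr_gt0 qexp_gt0.
  by move=> K s; apply: sum_ptrans; apply: ntrans_row.
by move=> K t; apply: sum_ptrans; apply: ntrans_col.
Qed.

Lemma has_density_wres (Phi : pred G) :
  has_density (fun n => Phi (wres n)) (#|Phi|%:R / (d * d)%:R : R).
Proof.
apply: has_density_of_blocks => e e_gt0.
have [K dist_K] := ptrans_mix e_gt0.
exists (q ^ K)%N => [|a]; first by rewrite expn_gt0 ltnW.
have block_count : (count_below (fun b => Phi (wres (q ^ K * a + b))) (q ^ K))%:R =
    (q ^ K)%:R * \sum_t (Phi t)%:R * ptrans K (wres a) t :> R.
  rewrite count_belowE; under eq_bigr => b _ do rewrite wres_block //.
  rewrite (sum_fiber (fun b : 'I_(q ^ K) => wstep K (wres a) b) (fun t => nat_of_bool (Phi t))).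
  rewrite natr_sum mulr_sumr; apply: eq_bigr => t _.
  by rewrite natrM /ptrans mulrC; field; rewrite gt_eqF ?qexp_gt0.
have density_sum : #|Phi|%:R / (d * d)%:R = \sum_t (Phi t)%:R * #|{: G}|%:R^-1 :> R.
  rewrite -mulr_suml -natr_sum -sum1_card big_mkcond card_prod card_ord /=.
  by congr (_%:R / _); apply: eq_bigr => t _; rewrite unfold_in; case: (Phi t).
rewrite block_count density_sum -mulrBr -sumrB normrM (gtr0_norm (qexp_gt0 K)).
rewrite (ler_pM2l (qexp_gt0 K)).
apply: le_trans (ler_norm_sum _ _ _) (le_trans _ (dist_K (wres a))).
apply: ler_sum => t _; rewrite -mulrBr normrM distrC.
by case: (Phi t); rewrite ?normr1 ?mul1r ?normr0 ?mul0r.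
Qed.

End TransitionProbabilities.

End ResidueChain.

Unset Implicit Arguments.

Theorem theorem3p2 (R : realType) (q d : nat) (psi theta x : int) :
  (2 <= q)%N -> (2 <= d)%N -> psi != 0 ->
  has_density
    (fun n : nat => (d%:Z %| psi * (wq q n)%:Z + theta * n%:Z + x)%Z)
    (if (gcdz (gcdz psi theta) d %| gcdz x d)%Z
     then (`|gcdz (gcdz psi theta) d|%N)%:R / d%:R : R
     else 0).
Proof.
move=> q_gt1 d_gt1 _; case: d d_gt1 => [|[|d']] // _; set d := d'.+2.
pose Phi : pred ('I_d * 'I_d) := fun t => (d%:Z %| psi * t.1%:Z + theta * t.2%:Z + x)%Z.
have -> : (fun n => (d%:Z %| psi * (wq q n)%:Z + theta * n%:Z + x)%Z) =
    (fun n => Phi (wres q d' n)).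
  by apply: funext => n; rewrite /Phi /= !Zp_nat /= dvdz_lin_modn.
set g := gcdn (gcdn `|psi| `|theta|) d.
have card_Phi : #|Phi| = (d * g * (g%:Z %| x)%Z)%N.
  by rewrite -card_lin_cong2 //; apply: eq_card => t; rewrite inE.
have g_eq : gcdz (gcdz psi theta) d = g%:Z by rewrite /gcdz !absz_nat.
have g_dvd_d : (g%:Z %| d%:Z)%Z by rewrite dvdzE !absz_nat dvdn_gcdr.
rewrite dvdz_gcd g_eq g_dvd_d andbT absz_nat.
suff -> : (if (g%:Z %| x)%Z then g%:R / d%:R else 0) = #|Phi|%:R / (d * d)%:R :> R.
  exact: has_density_wres.
rewrite card_Phi; case: (g%:Z %| x)%Z; last by rewrite muln0 mul0r.
by rewrite muln1 !natrM; field; rewrite pnatr_eq0.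
Qed.
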